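(* Let $(X,Y,Z)$ be a random element whose sample space is partially ordered (with the product order on pairs). If $X\uparrow^{\mathrm{st}}Y$ and $Z$ is independent of $(X,Y)$, then $(X,Z)\uparrow^{\mathrm{st}}Y$ and $(X,Z)\uparrow^{\mathrm{st}}(Y,Z)$.
   Context: For random elements $A,B$ on partially ordered spaces, $A\uparrow^{\mathrm{st}}B$ ($A$ is stochastically increasing in $B$) means that the regular conditional probability $\Pr(A\in\cdot\mid B=b)$ exists and, for every bounded non-decreasing function $h$ of $A$, the map $b\mapsto\mathbb E[h(A)\mid B=b]$ is non-decreasing (i.e. $b\preceq b'$ implies $\mathbb E[h(A)\mid B=b]\le\mathbb E[h(A)\mid B=b']$). *)

From HB Require Import structures.
From mathcomp Require Import all_boot all_order all_algebra.
From mathcomp Require Import all_classical all_reals all_analysis.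
Set Implicit Arguments. Unset Strict Implicit. Unset Printing Implicit Defensive.
Import Order.TTheory GRing.Theory Num.Theory.
Local Open Scope classical_set_scope.
Local Open Scope ring_scope.

Definition is_partial_order (A : Type) (le : A -> A -> Prop) : Prop :=
  [/\ (forall x, le x x),
      (forall x y, le x y -> le y x -> x = y) &
      (forall x y z, le x y -> le y z -> le x z)].

Definition prod_le (A B : Type) (leA : A -> A -> Prop) (leB : B -> B -> Prop)
  : A * B -> A * B -> Prop :=
  fun p q => leA p.1 q.1 /\ leB p.2 q.2.

Definition indep_re (R : realType) (d : measure_display) (Omega : measurableType d)
  (P : probability Omega R)
  (d1 : measure_display) (S1 : measurableType d1)
  (d2 : measure_display) (S2 : measurableType d2)
  (U : Omega -> S1) (V : Omega -> S2) : Prop :=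
  forall (A : set S1) (B : set S2), measurable A -> measurable B ->
    P (U @^-1` A `&` V @^-1` B) = (P (U @^-1` A) * P (V @^-1` B))%E.

Definition is_rcd (R : realType) (d : measure_display) (Omega : measurableType d)
  (P : probability Omega R)
  (dA : measure_display) (SA : measurableType dA)
  (dB : measure_display) (SB : measurableType dB)
  (A : Omega -> SA) (B : Omega -> SB) (k : R.-pker SB ~> SA) : Prop :=
  forall (C : set SA) (D : set SB), measurable C -> measurable D ->
    (P (A @^-1` C `&` B @^-1` D) = \int[P]_(w in B @^-1` D) k (B w) C)%E.

Definition stoch_incr (R : realType) (d : measure_display) (Omega : measurableType d)
  (P : probability Omega R)
  (dA : measure_display) (SA : measurableType dA)
  (dB : measure_display) (SB : measurableType dB)
  (leA : SA -> SA -> Prop) (leB : SB -> SB -> Prop)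
  (A : Omega -> SA) (B : Omega -> SB) : Prop :=
  exists k : R.-pker SB ~> SA, is_rcd P A B k /\
    forall h : SA -> R, measurable_fun setT h ->
      (exists M : R, forall x, `|h x| <= M) ->
      (forall x y, leA x y -> h x <= h y) ->
      forall b b', leB b b' ->
        (\int[k b]_x (h x)%:E <= \int[k b']_x (h x)%:E)%E.

From HB Require Import structures.
From mathcomp Require Import all_boot all_order all_algebra.
From mathcomp Require Import all_classical all_reals all_analysis.
From mathcomp Require Import measurable_realfun.
Import Order.TTheory GRing.Theory Num.Theory.

(* Let k be a regular conditional distribution of X given Y and mu the law
   of Z.  Independence of Z from (X, Y) makes y |-> k y (x) mu a regular
   conditional distribution of (X, Z) given Y; it also leaves y |-> k y a
   regular conditional distribution of X given (Y, Z), and appending the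
   function Z = snd (Y, Z) of the conditioning variable turns it into
   (y, z) |-> k y (x) delta_z.  Each identity is checked on rectangles, where
   it is the product rule for independent events, and extends to all
   measurable sets because finite measures on a product space are determined
   by their values on rectangles.
   For bounded non-decreasing h, the integral of h against k y (x) mu is the
   k y-integral of x |-> int h (x, z) dmu(z), which is again bounded,
   measurable and non-decreasing; the integral of h against k y (x) delta_z
   is the k y-integral of x |-> h (x, z), non-decreasing in y by hypothesis
   and in z pointwise. *)

Set Implicit Arguments.
Unset Strict Implicit.
Unset Printing Implicit Defensive.

Local Open Scope classical_set_scope.
Local Open Scope ring_scope.
Local Open Scope ereal_scope.

Lemma measurable_fun_preimage d d' (aT : measurableType d)
    (rT : measurableType d') (f : aT -> rT) (A : set rT) :
  measurable_fun setT f -> measurable A -> measurable (f @^-1` A).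
Proof. by move=> mf mA; rewrite -[X in measurable X]setTI; exact: mf. Qed.

Section kprecomp.
Context d0 d1 d2 (T0 : measurableType d0) (T1 : measurableType d1)
  (T2 : measurableType d2) (R : realType) (g : T0 -> T1).

Definition kprecomp (k : T1 -> {measure set T2 -> \bar R})
  (mg : measurable_fun setT g) : T0 -> {measure set T2 -> \bar R} := k \o g.

Variable mg : measurable_fun setT g.

Section kernel.
Variable k : R.-ker T1 ~> T2.

Let measurable_kprecomp U :
  measurable U -> measurable_fun setT (kprecomp k mg ^~ U).
Proof. by move=> mU; exact: measurableT_comp (measurable_kernel k U mU) mg. Qed.

HB.instance Definition _ :=
  isKernel.Build _ _ _ _ _ (kprecomp k mg) measurable_kprecomp.
End kernel.

Variable k : R.-pker T1 ~> T2.

Let kprecomp_setT t : kprecomp k mg t setT = 1.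
Proof. exact: prob_kernel. Qed.

HB.instance Definition _ :=
  Kernel_isProbability.Build _ _ _ _ _ (kprecomp k mg) kprecomp_setT.
End kprecomp.

Section mkproduct_probability.
Context d0 d1 d2 (T0 : measurableType d0) (T1 : measurableType d1)
  (T2 : measurableType d2) (R : realType).
Variables (k1 : R.-pker T0 ~> T1) (k2 : R.-pker (T0 * T1) ~> T2).

Lemma mkproductE t A : measurable A ->
  mkproduct k1 k2 t A = \int[k1 t]_x k2 (t, x) (xsection A x).
Proof.
move=> mA; rewrite /mkproduct /kproduct /=; apply: eq_integral => x _.
rewrite /kernel.intker_indic /= integral_indic ?setIT ?xsectionE//.
by rewrite -[X in measurable X]xsectionE; exact: measurable_xsection.
Qed.

Lemma mkproductX t A1 A2 : measurable A1 -> measurable A2 ->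
  mkproduct k1 k2 t (A1 `*` A2) = \int[k1 t]_(x in A1) k2 (t, x) A2.
Proof.
move=> mA1 mA2; rewrite mkproductE; last exact: measurableX.
rewrite [RHS]integral_mkcond; apply: eq_integral => x _.
rewrite patchE; case: ifPn => xA1; first by rewrite in_xsectionX.
by rewrite notin_xsectionX// measure0.
Qed.

Let mkproduct_setT t : mkproduct k1 k2 t setT = 1.
Proof.
rewrite -setXTT mkproductX// (eq_integral (fun=> 1)) => [|x _].
  by rewrite integral_cst// mul1e prob_kernel.
exact: prob_kernel.
Qed.

HB.instance Definition _ :=
  Kernel_isProbability.Build _ _ _ _ _ (mkproduct k1 k2) mkproduct_setT.
End mkproduct_probability.

(* The measure [k x] of a probability kernel carries no probability structure
   of its own, which product measures and Fubini's theorem require. *)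
Section kernel_prob.
Context d d' (X : measurableType d) (Y : measurableType d') (R : realType).
Variables (k : R.-pker X ~> Y) (x : X).

Definition kernel_prob : set Y -> \bar R := k x.

HB.instance Definition _ := Measure.copy kernel_prob (k x).
HB.instance Definition _ := Measure_isProbability.Build _ _ _ kernel_prob
  (@prob_kernel _ _ _ _ _ k x).
End kernel_prob.

Lemma bounded_integrable d (T : measurableType d) (R : realType)
    (mu : probability T R) (f : T -> R) (M : R) :
  measurable_fun setT f -> (forall x, `|f x| <= M)%R ->
  mu.-integrable setT (EFin \o f).
Proof.
move=> mf fM; apply: measurable_bounded_integrable => //.
  by rewrite ltey_eq fin_num_measure.
exists M; split; first exact: num_real.
by move=> r Mr x _; exact: le_trans (fM x) (ltW Mr).
Qed.

Lemma integral_mkproduct_cst d0 d1 d2 (T0 : measurableType d0)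
    (T1 : measurableType d1) (T2 : measurableType d2) (R : realType)
    (k1 : R.-pker T0 ~> T1) (k2 : R.-pker (T0 * T1) ~> T2) t
    (m : probability T2 R) (h : T1 * T2 -> R) (M : R) :
  (forall x A, measurable A -> k2 (t, x) A = m A) ->
  measurable_fun setT h -> (forall p, `|h p| <= M)%R ->
  \int[mkproduct k1 k2 t]_p (h p)%:E = \int[k1 t]_x \int[m]_z (h (x, z))%:E.
Proof.
move=> k2m mh hM.
rewrite (eq_measure_integral (kernel_prob k1 t \x m)) => [|A mA _].
  rewrite -integral12_prod_meas1//.
  by have := bounded_integrable (kernel_prob k1 t \x m) mh hM.
rewrite mkproductE//; apply: eq_integral => x _.
by apply: k2m; exact: measurable_xsection.
Qed.

Section Rintegral_section.
Context d1 d2 (T1 : measurableType d1) (T2 : measurableType d2) (R : realType).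
Variables (m : probability T2 R) (h : T1 * T2 -> R) (M : R).
Hypotheses (mh : measurable_fun setT h) (hM : forall p, (`|h p| <= M)%R).

Lemma integrable_section x : m.-integrable setT (EFin \o (fun z => h (x, z))).
Proof.
by apply: bounded_integrable => [|z]; [exact: measurable_fun_pair2|exact: hM].
Qed.

Lemma EFin_Rintegral_section x :
  (\int[m]_z h (x, z))%:E = \int[m]_z (h (x, z))%:E.
Proof.
by rewrite fineK//; exact: integrable_fin_num (integrable_section x).
Qed.

Lemma normr_Rintegral_section_le x : (`|\int[m]_z h (x, z)| <= M)%R.
Proof.
apply: le_trans (le_normr_Rintegral _ (integrable_section x)) _ => //.
apply: le_trans (le_Rintegral _ _ _ (fun z _ => hM (x, z))) _ => //.
- apply: (bounded_integrable _ (M := M)) => [|z].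
    exact/measurableT_comp/measurable_fun_pair2.
  by rewrite normr_id; exact: hM.
- exact: (bounded_integrable _ (M := `|M|%R)).
rewrite Rintegral_cst//.
have -> : fine (m setT) = 1%R by rewrite probability_setT.
by rewrite mulr1.
Qed.

(* Tonelli only applies to non-negative integrands, hence the split of h into
   its positive and negative parts. *)
Lemma measurable_Rintegral_section :
  measurable_fun setT (fun x => \int[m]_z h (x, z))%R.
Proof.
apply: measurableT_comp (fine_measurable measurableT) _.
have mEh : measurable_fun setT (EFin \o h) by exact/measurable_EFinP.
have mFp : measurable_fun setT (fubini_F m (EFin \o h)^\+).
  by apply: measurable_fun_fubini_tonelli_F => //; exact: measurable_funepos.
have mFn : measurable_fun setT (fubini_F m (EFin \o h)^\-).
  by apply: measurable_fun_fubini_tonelli_F => //; exact: measurable_funeneg.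
have -> : (fun x => \int[m]_z (h (x, z))%:E) =
    fubini_F m (EFin \o h)^\+ \- fubini_F m (EFin \o h)^\-.
  apply/funext => x; rewrite [LHS]integralE.
  by congr (_ - _); apply: eq_integral => z _; rewrite ?funeposE ?funenegE.
exact: emeasurable_funB.
Qed.

End Rintegral_section.

Lemma integral_mrestr d (T : measurableType d) (R : realType)
    (mu : {measure set T -> \bar R}) (E D : set T) (mE : measurable E)
    (g : T -> \bar R) :
  measurable D -> measurable_fun D g -> (forall x, D x -> 0 <= g x) ->
  \int[mrestr mu mE]_(x in D) g x = \int[mu]_(x in D `&` E) g x.
Proof.
move=> mD mg g0.
rewrite (@ge0_negligible_integral _ _ _ _ D (~` E))//; first last.
- by rewrite /= /mrestr setICl measure0.
- exact: measurableC.
rewrite setDE setCK; apply: eq_measure_integral => A mA AD.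
by rewrite /= /mrestr setIidl//; apply: subset_trans AD _; exact: subIsetr.
Qed.

Section mixture.
Context d dT (Om : measurableType d) (T : measurableType dT) (R : realType).
Variable mu : {measure set Om -> \bar R}.
Variable F : Om -> {measure set T -> \bar R}.

Definition mixture (mF : forall C, measurable C -> measurable_fun setT (F ^~ C))
  : set T -> \bar R := fun C => \int[mu]_w F w C.

Hypothesis mF : forall C, measurable C -> measurable_fun setT (F ^~ C).

Let mixture0 : mixture mF set0 = 0.
Proof. by apply: integral0_eq => w _; rewrite measure0. Qed.

Let mixture_ge0 C : 0 <= mixture mF C.
Proof. exact: integral_ge0. Qed.

Let mixture_sigma_additive : semi_sigma_additive (mixture mF).
Proof.
move=> U mU tU mUU; rewrite /mixture [X in _ --> X](_ : _ =
    \int[mu]_w (\sum_(n <oo) F w (U n))); last first.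
  apply: eq_integral => w _; apply/esym/cvg_lim => //.
  exact/measure_semi_sigma_additive.
apply/cvg_closeP; split.
  by apply: is_cvg_nneseries => n _ _; exact: integral_ge0.
by rewrite closeE// integral_nneseries// => n; exact: mF.
Qed.

HB.instance Definition _ := isMeasure.Build _ _ R (mixture mF)
  mixture0 mixture_ge0 mixture_sigma_additive.
End mixture.

Section indefinite_integral.
Context d (T : measurableType d) (R : realType).
Variables (mu : {measure set T -> \bar R}) (f : T -> \bar R).

Definition mintegral (mf : measurable_fun setT f) (f0 : forall x, 0 <= f x) :
  set T -> \bar R := fun A => \int[mu]_(x in A) f x.

Hypotheses (mf : measurable_fun setT f) (f0 : forall x, 0 <= f x).

Let mintegral0 : mintegral mf f0 set0 = 0.
Proof. exact: integral_set0. Qed.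

Let mintegral_ge0 A : 0 <= mintegral mf f0 A.
Proof. exact: integral_ge0. Qed.

Let mintegral_sigma_additive : semi_sigma_additive (mintegral mf f0).
Proof.
move=> U mU tU mUU; rewrite /mintegral ge0_integral_bigcup//.
- by apply: is_cvg_nneseries => n _ _; exact: integral_ge0.
- exact: measurable_funTS.
Qed.

HB.instance Definition _ := isMeasure.Build _ _ R (mintegral mf f0)
  mintegral0 mintegral_ge0 mintegral_sigma_additive.
End indefinite_integral.

Lemma measure_unique_setX d1 d2 (T1 : measurableType d1)
    (T2 : measurableType d2) (R : realType)
    (m1 m2 : {measure set (T1 * T2) -> \bar R}) :
  (forall A B, measurable A -> measurable B -> m1 (A `*` B) = m2 (A `*` B)) ->
  m1 setT < +oo -> forall C, measurable C -> m1 C = m2 C.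
Proof.
move=> m12 m1fin C mC.
apply: (measure_unique [set A `*` B | A in measurable & B in measurable]
  (fun=> setT)) => //.
- exact: measurable_prod_measurableType.
- move=> _ _ [X1 mX1 [X2 mX2 <-]] [Y1 mY1 [Y2 mY2 <-]]; rewrite -setXI.
  by exists (X1 `&` Y1); [|exists (X2 `&` Y2)] => //; exact: measurableI.
- by move=> _; exists setT => //; exists setT => //; rewrite setXTT.
- by rewrite bigcup_const.
- by move=> _ [A mA [B mB <-]]; exact: m12.
Qed.

Section conditional_distribution.
Context (R : realType) d (Om : measurableType d) (P : probability Om R).

(* For fixed D both sides are finite measures in C: the image of P restricted
   to B @^-1` D under W, and the mixture of the k (B w) over that
   restriction. *)
Lemma is_rcd_from_rectangles d1 d2 dB (T1 : measurableType d1)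
    (T2 : measurableType d2) (SB : measurableType dB)
    (W : Om -> (T1 * T2)%type) (B : Om -> SB)
    (k : R.-pker SB ~> (T1 * T2)%type) :
  measurable_fun setT W -> measurable_fun setT B ->
  (forall A1 A2 D, measurable A1 -> measurable A2 -> measurable D ->
    P (W @^-1` (A1 `*` A2) `&` B @^-1` D) =
    \int[P]_(w in B @^-1` D) k (B w) (A1 `*` A2)) ->
  is_rcd P W B k.
Proof.
move=> mW mB hrect C D mC mD.
have mBD := measurable_fun_preimage mB mD.
have mkB C' : measurable C' -> measurable_fun setT (fun w => k (B w) C').
  by move=> mC'; exact: measurableT_comp (measurable_kernel k _ mC') mB.
have mixtureE C' : measurable C' ->
    mixture (mrestr P mBD) mkB C' = \int[P]_(w in B @^-1` D) k (B w) C'.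
  move=> mC'; rewrite /mixture integral_mrestr//; last exact: mkB.
  exact: (congr1 (fun A => \int[P]_(w in A) k (B w) C') (setTI _)).
rewrite -mixtureE//.
apply: (measure_unique_setX (m1 := pushforward (mrestr P mBD) W)) => //.
  move=> A1 A2 mA1 mA2; have mA12 := measurableX mA1 mA2.
  exact: etrans (hrect _ _ _ mA1 mA2 mD) (esym (mixtureE _ mA12)).
apply: le_lt_trans (probability_le1 P _) (ltry 1).
exact: measurableI (measurable_fun_preimage mW measurableT) mBD.
Qed.

Lemma is_rcd_from_cond_rectangles dA d1 d2 (SA : measurableType dA)
    (T1 : measurableType d1) (T2 : measurableType d2)
    (A : Om -> SA) (V : Om -> (T1 * T2)%type) (k : R.-pker (T1 * T2) ~> SA) :
  measurable_fun setT A -> measurable_fun setT V ->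
  (forall C D1 D2, measurable C -> measurable D1 -> measurable D2 ->
    P (A @^-1` C `&` V @^-1` (D1 `*` D2)) =
    \int[P]_(w in V @^-1` (D1 `*` D2)) k (V w) C) ->
  is_rcd P A V k.
Proof.
move=> mA mV hrect C D mC mD.
have mAC := measurable_fun_preimage mA mC.
have mkV : measurable_fun setT (fun w => k (V w) C).
  exact: measurableT_comp (measurable_kernel k _ mC) mV.
have kV0 w : 0 <= k (V w) C by exact: measure_ge0.
rewrite setIC.
apply: (measure_unique_setX (m1 := pushforward (mrestr P mAC) V)
  (m2 := pushforward (mintegral P mkV kV0) V)) => //.
  by move=> D1 D2 mD1 mD2; rewrite /= /pushforward /mrestr setIC hrect.
apply: le_lt_trans (probability_le1 P _) (ltry 1).
exact: measurableI (measurable_fun_preimage mV measurableT) mAC.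
Qed.

(* The image of P restricted to E under Y is P E times the law of Y. *)
Lemma integral_setI_indep dY (SY : measurableType dY) (Y : Om -> SY)
    (E : set Om) (f : SY -> \bar R) (A : set SY) :
  measurable_fun setT Y -> measurable E ->
  (forall A', measurable A' -> P (Y @^-1` A' `&` E) = P (Y @^-1` A') * P E) ->
  measurable_fun setT f -> (forall y, 0 <= f y) -> measurable A ->
  \int[P]_(w in Y @^-1` A `&` E) f (Y w) =
  P E * \int[P]_(w in Y @^-1` A) f (Y w).
Proof.
move=> mY mE hind mf f0 mA.
have mfY : measurable_fun setT (f \o Y) by exact: measurableT_comp.
pose c : {nonneg R} := NngNum (fine_ge0 (measure_ge0 P E)).
have cE : (c%:num)%:E = P E by rewrite /= fineK// fin_num_measure.
rewrite -integral_mrestr//; last 2 first.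
  exact: measurable_fun_preimage.
  exact: measurable_funTS.
rewrite -(ge0_integral_pushforward mY (mrestr P mE) mA) => //; last first.
  exact: measurable_funTS.
rewrite (eq_measure_integral (mscale c (pushforward P Y))) => [|A' mA' _];
  last first.
  by rewrite /= /mscale /pushforward /mrestr cE hind// muleC.
by rewrite ge0_integral_mscale ?cE ?ge0_integral_pushforward//;
  exact: measurable_funTS.
Qed.

Lemma is_rcd_pair_fun dA dB dF (SA : measurableType dA)
    (SB : measurableType dB) (SF : measurableType dF)
    (A : Om -> SA) (B : Om -> SB) (f : SB -> SF)
    (k : R.-pker SB ~> SA) (mf : measurable_fun setT f) :
  measurable_fun setT A -> measurable_fun setT B -> is_rcd P A B k ->
  is_rcd P (fun w => (A w, f (B w))) B
    (mkproduct k (kdirac (measurableT_comp mf measurable_fst))).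
Proof.
move=> mA mB hk; apply: is_rcd_from_rectangles => //.
  by apply/measurable_fun_pairP; split => //; exact: measurableT_comp mf mB.
move=> A1 A2 D mA1 mA2 mD.
under eq_integral => w _ do rewrite mkproductX// /kdirac /= integral_cst//.
transitivity
    (\int[P]_(w in B @^-1` D `&` B @^-1` (f @^-1` A2)) k (B w) A1).
  have mDA2 := measurableI _ _ mD (measurable_fun_preimage mf mA2).
  rewrite -preimage_setI -hk//.
  by congr (P _); apply/seteqP; split => w /=; tauto.
rewrite integral_mkcondr epatch_indic; apply: eq_integral => w _.
by rewrite muleC.
Qed.

Section independent_component.
Context dX dY dZ (SX : measurableType dX) (SY : measurableType dY)
  (SZ : measurableType dZ) (X : Om -> SX) (Y : Om -> SY) (Z : Om -> SZ).
Hypotheses (mX : measurable_fun setT X) (mY : measurable_fun setT Y)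
  (mZ : measurable_fun setT Z).
Variable k : R.-pker SY ~> SX.
Hypotheses (hk : is_rcd P X Y k) (hind : indep_re P Z (fun w => (X w, Y w))).

Lemma is_rcd_indep_pair (mu : probability SZ R) :
  (forall B, measurable B -> mu B = P (Z @^-1` B)) ->
  is_rcd P (fun w => (X w, Z w)) Y
    (mkproduct k (kprobability (measurable_cst (mu : pprobability SZ R)))).
Proof.
move=> muE; apply: is_rcd_from_rectangles => //.
  exact/measurable_fun_pairP.
move=> A B D mA mB mD.
under eq_integral => w _ do
  rewrite mkproductX// /kprobability /= integral_cst//.
rewrite ge0_integralZl//; last 2 first.
  exact: measurable_fun_preimage.
  exact: measurable_funTS (measurableT_comp (measurable_kernel k _ mA) mY).
rewrite -hk// muE//.
have -> : (fun w => (X w, Z w)) @^-1` (A `*` B) `&` Y @^-1` D =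
    Z @^-1` B `&` (fun w => (X w, Y w)) @^-1` (A `*` D).
  by apply/seteqP; split => w /=; tauto.
by rewrite hind//; exact: measurableX.
Qed.

Lemma is_rcd_indep_cond :
  is_rcd P X (fun w => (Y w, Z w)) (kprecomp k (@measurable_fst _ _ SY SZ)).
Proof.
have indepYZ B : measurable B -> forall A, measurable A ->
    P (Y @^-1` A `&` Z @^-1` B) = P (Y @^-1` A) * P (Z @^-1` B).
  move=> mB A mA; have := hind mB (measurableX measurableT mA).
  have -> : (fun w => (X w, Y w)) @^-1` (setT `*` A) = Y @^-1` A.
    by apply/seteqP; split => w /=; tauto.
  by rewrite setIC muleC.
apply: is_rcd_from_cond_rectangles => //; first exact/measurable_fun_pairP.
move=> C D1 D2 mC mD1 mD2.
transitivity (P (Z @^-1` D2) * \int[P]_(w in Y @^-1` D1) k (Y w) C).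
  rewrite -hk//.
  have -> : X @^-1` C `&` (fun w => (Y w, Z w)) @^-1` (D1 `*` D2) =
      Z @^-1` D2 `&` (fun w => (X w, Y w)) @^-1` (C `*` D1).
    by apply/seteqP; split => w /=; tauto.
  by rewrite hind//; exact: measurableX.
exact/esym/(integral_setI_indep mY (measurable_fun_preimage mZ mD2)
  (indepYZ _ mD2) (measurable_kernel k _ mC) (fun _ => measure_ge0 _ _) mD1).
Qed.

End independent_component.
End conditional_distribution.

(* [stoch_incr P leA leB A B] unfolds to
   [exists k, is_rcd P A B k /\ stoch_monotone leA leB k]. *)
Definition stoch_monotone (R : realType) dA dB (SA : measurableType dA)
    (SB : measurableType dB) (leA : SA -> SA -> Prop) (leB : SB -> SB -> Prop)
    (k : R.-pker SB ~> SA) :=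
  forall h : SA -> R, measurable_fun setT h ->
    (exists M : R, forall x, (`|h x| <= M)%R) ->
    (forall x y, leA x y -> (h x <= h y)%R) ->
    forall b b', leB b b' -> \int[k b]_x (h x)%:E <= \int[k b']_x (h x)%:E.

Section stochastic_monotonicity.
Context dX dY dZ (SX : measurableType dX) (SY : measurableType dY)
  (SZ : measurableType dZ) (R : realType).
Variables (leX : SX -> SX -> Prop) (leY : SY -> SY -> Prop).
Variable leZ : SZ -> SZ -> Prop.
Variable k : R.-pker SY ~> SX.
Hypothesis hk : stoch_monotone leX leY k.

Lemma stoch_monotone_mkproduct_cst (mu : probability SZ R) :
  (forall z, leZ z z) ->
  stoch_monotone (prod_le leX leZ) leY
    (mkproduct k (kprobability (measurable_cst (mu : pprobability SZ R)))).
Proof.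
move=> reflZ h mh [M hM] hmon y y' yy'.
rewrite !(integral_mkproduct_cst _ (m := mu) _ mh hM)//.
under eq_integral do rewrite -(EFin_Rintegral_section _ mh hM).
under [leRHS]eq_integral do rewrite -(EFin_Rintegral_section _ mh hM).
apply: hk yy'; first exact: measurable_Rintegral_section.
  by exists M; exact: normr_Rintegral_section_le.
move=> x x' xx'; apply: le_Rintegral => //; try exact: integrable_section.
by move=> z _; apply: hmon.
Qed.

Lemma stoch_monotone_mkproduct_dirac :
  (forall x, leX x x) -> (forall z, leZ z z) ->
  stoch_monotone (prod_le leX leZ) (prod_le leY leZ)
    (mkproduct (kprecomp k (@measurable_fst _ _ SY SZ))
      (kdirac (measurableT_comp measurable_snd measurable_fst))).
Proof.
move=> reflX reflZ h mh [M hM] hmon [y z] [y' z'] [/= yy' zz'].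
have hE a c : \int[mkproduct (kprecomp k (@measurable_fst _ _ SY SZ))
      (kdirac (measurableT_comp measurable_snd measurable_fst)) (a, c)]_p
      (h p)%:E =
    \int[k a]_x (h (x, c))%:E.
  rewrite (integral_mkproduct_cst _ (m := \d_c) _ mh hM)//.
  apply: eq_integral => x _; rewrite integral_dirac ?diracT ?mul1e//.
  exact/measurable_EFinP/measurable_fun_pair2.
rewrite !hE; apply: le_trans (@hk (fun x => h (x, z)) _ _ _ _ _ yy') _.
- exact: measurable_fun_pair1.
- by exists M.
- by move=> x x' xx'; apply: hmon.
apply: (@le_integral _ _ _ (kernel_prob k y')) => //.
- exact: bounded_integrable (measurable_fun_pair1 _ mh) (fun x => hM (x, z)).
- exact: bounded_integrable (measurable_fun_pair1 _ mh) (fun x => hM (x, z')).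
- by move=> x _; rewrite lee_fin; apply: hmon.
Qed.

End stochastic_monotonicity.

Local Close Scope ereal_scope.
Unset Implicit Arguments.

Theorem lemma4 (R : realType) (d : measure_display) (Omega : measurableType d)
  (P : probability Omega R)
  (dX : measure_display) (SX : measurableType dX)
  (dY : measure_display) (SY : measurableType dY)
  (dZ : measure_display) (SZ : measurableType dZ)
  (leX : SX -> SX -> Prop) (leY : SY -> SY -> Prop) (leZ : SZ -> SZ -> Prop)
  (poX : is_partial_order leX) (poY : is_partial_order leY)
  (poZ : is_partial_order leZ)
  (X : Omega -> SX) (Y : Omega -> SY) (Z : Omega -> SZ)
  (mX : measurable_fun setT X) (mY : measurable_fun setT Y)
  (mZ : measurable_fun setT Z)
  (hXY : stoch_incr P leX leY X Y)
  (hind : indep_re P Z (fun w => (X w, Y w))) :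
  stoch_incr P (prod_le leX leZ) leY (fun w => (X w, Z w)) Y /\
  stoch_incr P (prod_le leX leZ) (prod_le leY leZ)
    (fun w => (X w, Z w)) (fun w => (Y w, Z w)).
Proof.
have [k [hk hkmono]] := hXY.
have [reflX _ _] := poX; have [reflZ _ _] := poZ.
have mYZ : measurable_fun setT (fun w => (Y w, Z w)).
  exact/measurable_fun_pairP.
split.
- pose mu := distribution P (mfun_Sub (mem_set mZ)).
  exists (mkproduct k (kprobability (measurable_cst (mu : pprobability SZ R)))).
  split; last exact: stoch_monotone_mkproduct_cst.
  exact: is_rcd_indep_pair.
- exists (mkproduct (kprecomp k (@measurable_fst _ _ SY SZ))
    (kdirac (measurableT_comp measurable_snd measurable_fst))).
  split; last exact: stoch_monotone_mkproduct_dirac.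
  exact: is_rcd_pair_fun mX mYZ (is_rcd_indep_cond mX mY mZ hk hind).
Qed.
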